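(* Let $q_1,q_2$ be inference programs such that for every input $c$ the evaluation of $q_1(c)$ is strictly properly weighted for $\gamma_1(\cdot\,;c)$ and the evaluation of $q_2(c)$ is strictly properly weighted for $\gamma_2(\cdot\,;c)$. Then for every input $c_0$, evaluation of $q_3=\mathtt{compose}(q_2,q_1)$ on $c_0$ is strictly properly weighted for its unnormalized density $\gamma_3(\tau_2\oplus\tau_1;c_0)=\gamma_2(\tau_2;c_1)\,\gamma_1(\tau_1;c_0)$, where $c_1$ is the return value of $q_1$ associated with $\tau_1$.
   Context: Traces $\tau$ are finite maps from addresses to values of sampled variables; density maps $\rho$ are finite maps from addresses to $[0,\infty)$; $\oplus$ is union of maps with disjoint domains. Evaluation $c,\tau,\rho,w\leftsquigarrow q(c')$ randomly returns a value, a trace, a density map and a weight. The program $\mathtt{compose}(q_2,q_1)(c_0)$ evaluates $c_1,\tau_1,\rho_1,w_1\leftsquigarrow q_1(c_0)$, then $c_2,\tau_2,\rho_2,w_2\leftsquigarrow q_2(c_1)$, requires $\mathrm{dom}(\rho_1)\cap\mathrm{dom}(\rho_2)=\emptyset$, and returns $c_2,\tau_2\oplus\tau_1,\rho_2\oplus\rho_1,w_2w_1$. An evaluation is strictly properly weighted for an unnormalized density $\gamma$ (w.r.t. a reference measure $d\tau$) if $\mathbb{E}[w\,h(\tau)]=\int d\tau\,\gamma(\tau)h(\tau)$ for all measurable $h$. *)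

From HB Require Import structures.
From mathcomp Require Import all_boot all_order all_algebra.
From mathcomp Require Import all_classical all_reals all_analysis measurable_realfun.
Set Implicit Arguments. Unset Strict Implicit. Unset Printing Implicit Defensive.
Import Order.TTheory GRing.Theory Num.Theory.
Local Open Scope classical_set_scope.
Local Open Scope ring_scope.
Local Open Scope ereal_scope.

(* An evaluation  c, tau, rho, w <~ q(c')  returns an element of
   Out C Tr Rho R := C * (Tr * (Rho * R))  (value, trace, density map, weight). *)
Definition Out (C Tr Rho R : Type) := (C * (Tr * (Rho * R)))%type.

Section accessors.
Context {C Tr Rho R : Type}.
Definition out_val (x : Out C Tr Rho R) : C := x.1.
Definition out_tr (x : Out C Tr Rho R) : Tr := x.2.1.
Definition out_rho (x : Out C Tr Rho R) : Rho := x.2.2.1.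
Definition out_w (x : Out C Tr Rho R) : R := x.2.2.2.
End accessors.

(* Generic "strictly properly weighted": the evaluation, described by its
   expectation functional E (E f = expectation of f(output)), satisfies
   E[w h(tau)] = I h  for every measurable h >= 0, where
   I h = \int d tau gamma(tau) h(tau)  is integration against the
   unnormalized density gamma w.r.t. the reference measure. *)
Definition spw_gen {R : realType} {dT} {Tr : measurableType dT} {O : Type}
  (E : (O -> \bar R) -> \bar R) (tr : O -> Tr) (w : O -> R)
  (Igamma : (Tr -> \bar R) -> \bar R) : Prop :=
  forall h : Tr -> \bar R, measurable_fun setT h -> (forall t, 0 <= h t) ->
    E (fun x => (w x)%:E * h (tr x)) = Igamma h.

Definition eval_expect {R : realType} {dC dO} {C : measurableType dC}
  {O : measurableType dO} (q : R.-pker C ~> O) (c : C) (f : O -> \bar R) : \bar R :=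
  \int[q c]_x f x.

Definition strictly_properly_weighted {R : realType} {dC dT dRho}
  {C : measurableType dC} {Tr : measurableType dT} {Rho : measurableType dRho}
  (q : R.-pker C ~> Out C Tr Rho R) (c : C)
  (ref : {measure set Tr -> \bar R}) (gamma : Tr -> R) : Prop :=
  spw_gen (eval_expect q c) out_tr out_w (fun h => \int[ref]_t ((gamma t)%:E * h t)).

Definition compose_out {C Tr Rho : Type} {R : realType}
  (mergeT : Tr -> Tr -> Tr) (mergeRho : Rho -> Rho -> Rho)
  (x2 x1 : Out C Tr Rho R) : Out C Tr Rho R :=
  (out_val x2, (mergeT (out_tr x2) (out_tr x1),
                (mergeRho (out_rho x2) (out_rho x1), out_w x2 * out_w x1)%R)).

Definition compose_expect {R : realType} {dC dT dRho}
  {C : measurableType dC} {Tr : measurableType dT} {Rho : measurableType dRho}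
  (mergeT : Tr -> Tr -> Tr) (mergeRho : Rho -> Rho -> Rho)
  (q2 q1 : R.-pker C ~> Out C Tr Rho R) (c0 : C)
  (f : Out C Tr Rho R -> \bar R) : \bar R :=
  \int[q1 c0]_x1 \int[q2 (out_val x1)]_x2 f (compose_out mergeT mergeRho x2 x1).

(* Integration against gamma3(tau2 (+) tau1; c0) = gamma2(tau2; c1) gamma1(tau1; c0)
   (c1 = ret1 c0 tau1) w.r.t. the composite reference measure d tau1 d tau2. *)
Definition composite_density_integral {R : realType} {dC dT}
  {C : measurableType dC} {Tr : measurableType dT}
  (mergeT : Tr -> Tr -> Tr) (ref : {measure set Tr -> \bar R})
  (gamma1 gamma2 : Tr -> C -> R) (ret1 : C -> Tr -> C) (c0 : C)
  (h : Tr -> \bar R) : \bar R :=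
  \int[ref]_t1 \int[ref]_t2
     ((gamma2 t2 (ret1 c0 t1) * gamma1 t1 c0)%R%:E * h (mergeT t2 t1)).

From HB Require Import structures.
From mathcomp Require Import all_boot all_order all_algebra.
From mathcomp Require Import all_classical all_reals all_analysis measurable_realfun.
Import Order.TTheory GRing.Theory Num.Theory.
Local Open Scope classical_set_scope.
Local Open Scope ring_scope.
Local Open Scope ereal_scope.

(* Write E1, E2 for the expectations of q1(c0) and q2(c1), and
     I2 c t1 := \int d tau2 gamma2(tau2; c) h(tau2 (+) t1).
   For a fixed first output x1 = (c1, tau1, rho1, w1) with w1 >= 0, the
   inner expectation E2[w2 w1 h(tau2 (+) tau1)] equals w1 * I2 c1 tau1, by
   strict proper weighting of q2(c1) applied to the test function
   tau2 |-> h(tau2 (+) tau1) (lemma [spw_scaled]).  Almost surely c1 is the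
   value ret1 c0 tau1 determined by the trace, so the composite expectation
   is E1[w1 H(tau1)] with H t1 := I2 (ret1 c0 t1) t1, and proper weighting
   of q1(c0) for the test function H gives \int d tau1 gamma1(tau1; c0) H(tau1),
   which is the composite density integral after pulling gamma1 inside. *)

Section partial_integral.
Context d1 d2 (T1 : measurableType d1) (T2 : measurableType d2) (R : realType).
Variables (m : {measure set T2 -> \bar R}) (m_sfinite : sigma_finite setT m).
Let m' := (m : set T2 -> \bar R).
HB.instance Definition _ := Measure.on m'.
HB.instance Definition _ := @Measure_isSigmaFinite.Build _ _ _ m' m_sfinite.

Lemma measurable_fun_partial_integral (F : T1 * T2 -> \bar R) :
  measurable_fun setT F -> (forall z, 0 <= F z) ->
  measurable_fun setT (fun x => \int[m]_y F (x, y)).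
Proof. by move=> mF F0; exact: (@measurable_fun_fubini_tonelli_F _ _ _ _ _ m'). Qed.
End partial_integral.

Section kernel_integral.
Context dX dC dO (X : measurableType dX) (C : measurableType dC)
  (O : measurableType dO) (R : realType).
Variables (q : R.-pker C ~> O) (f : X -> C) (mf : measurable_fun setT f).
Let qf := fun x => q (f x).
Let measurable_qf U : measurable U -> measurable_fun [set: X] (qf ^~ U).
Proof. by move=> mU; exact: measurableT_comp (measurable_kernel q U mU) mf. Qed.
HB.instance Definition _ := isKernel.Build _ _ _ _ _ qf measurable_qf.
Let qf_prob x : qf x [set: O] = 1. Proof. exact: prob_kernel. Qed.
HB.instance Definition _ := Kernel_isProbability.Build _ _ _ _ _ qf qf_prob.

Lemma measurable_fun_pker_integral (F : X * O -> \bar R) :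
  measurable_fun setT F ->
  measurable_fun setT (fun x => \int[q (f x)]_y F (x, y)).
Proof.
move=> mF.
have mP : measurable_fun setT (fun x => \int[qf x]_y F^\+ (x, y)).
  by apply: (measurable_fun_integral_finite_kernel _ qf) => //;
     exact: measurable_funepos.
have mN : measurable_fun setT (fun x => \int[qf x]_y F^\- (x, y)).
  by apply: (measurable_fun_integral_finite_kernel _ qf) => //;
     exact: measurable_funeneg.
apply: eq_measurable_fun (emeasurable_funB mP mN) => x _.
rewrite [RHS]integralE; congr (_ - _); apply: eq_integral => y _.
  by rewrite !funeposE.
by rewrite !funenegE.
Qed.
End kernel_integral.

Lemma ae_ge0_integralZl d (T : measurableType d) (R : realType)
    (mu : {measure set T -> \bar R}) (f : T -> \bar R) (k : R) :
  (0 <= k)%R -> measurable_fun setT f -> {ae mu, forall x, 0 <= f x} ->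
  \int[mu]_x (k%:E * f x) = k%:E * \int[mu]_x f x.
Proof.
move=> k0 mf f0.
have mfp : measurable_fun setT f^\+ by exact: measurable_funepos.
have f_fp : ae_eq mu setT f f^\+.
  by apply: filterS f0 => x fx0 _; rewrite funeposE; apply/esym/max_idPl.
have kf_kfp : ae_eq mu setT (fun x => k%:E * f x) (fun x => k%:E * f^\+ x).
  by apply: filterS f_fp => x /(_ I) ->.
rewrite (ae_eq_integral _ _ measurableT _ _ kf_kfp); last 2 first.
- by apply: emeasurable_funM => //; exact: measurable_cst.
- by apply: emeasurable_funM => //; exact: measurable_cst.
rewrite ge0_integralZl //.
by congr (_ * _); exact/esym/(ae_eq_integral _ _ measurableT mf mfp f_fp).
Qed.

Section evaluation.
Context {R : realType} {dC dT dRho : measure_display} {C : measurableType dC}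
  {Tr : measurableType dT} {Rho : measurableType dRho}.
Local Notation O := (Out C Tr Rho R).

Lemma measurable_out_val : measurable_fun setT (@out_val C Tr Rho R).
Proof. exact: measurable_fst. Qed.

Lemma measurable_out_tr : measurable_fun setT (@out_tr C Tr Rho R).
Proof. exact: measurableT_comp measurable_fst measurable_snd. Qed.

Lemma measurable_out_w : measurable_fun setT (@out_w C Tr Rho R).
Proof.
apply: measurableT_comp measurable_snd _.
exact: measurableT_comp measurable_snd measurable_snd.
Qed.

Lemma spw_scaled {q : R.-pker C ~> O} {c : C} {ref : {measure set Tr -> \bar R}}
    {gamma : Tr -> R} {a : R} {h : Tr -> \bar R} :
  strictly_properly_weighted q c ref gamma ->
  {ae q c, forall x, (0 <= out_w x)%R} -> (0 <= a)%R ->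
  measurable_fun setT h -> (forall t, 0 <= h t) ->
  \int[q c]_x ((out_w x * a)%:E * h (out_tr x))
  = a%:E * \int[ref]_t ((gamma t)%:E * h t).
Proof.
move=> spw w0 a0 mh h0.
rewrite (eq_integral (fun x : Out C Tr Rho R => a%:E * ((out_w x)%:E * h (out_tr x)))); last first.
  by move=> x _; rewrite EFinM muleAC muleC.
rewrite ae_ge0_integralZl //; first by rewrite -(spw h mh h0).
- apply: emeasurable_funM; first by apply/measurable_EFinP; exact: measurable_out_w.
  exact: measurableT_comp mh measurable_out_tr.
- by apply: filterS w0 => x wx0; apply: mule_ge0; rewrite ?lee_fin.
Qed.
End evaluation.

Section composition.
Context {R : realType} {dC dT dRho : measure_display} {C : measurableType dC}
  {Tr : measurableType dT} {Rho : measurableType dRho}.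
Local Notation O := (Out C Tr Rho R).
Variable mergeT : Tr -> Tr -> Tr.
Variables (ref : {measure set Tr -> \bar R}) (gamma2 : Tr -> C -> R).
Hypothesis ref_sfinite : sigma_finite setT ref.
Hypothesis measurable_mergeT :
  measurable_fun setT (fun p : Tr * Tr => mergeT p.1 p.2).
Hypothesis measurable_gamma2 :
  measurable_fun setT (fun p : Tr * C => gamma2 p.1 p.2).
Hypothesis gamma2_ge0 : forall t c, (0 <= gamma2 t c)%R.
Variable h : Tr -> \bar R.
Hypotheses (mh : measurable_fun setT h) (h_ge0 : forall t, 0 <= h t).

Definition shifted_integral (c : C) (t1 : Tr) : \bar R :=
  \int[ref]_t2 ((gamma2 t2 c)%:E * h (mergeT t2 t1)).

Lemma measurable_h_merge (t1 : Tr) : measurable_fun setT (fun t => h (mergeT t t1)).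
Proof.
exact: measurableT_comp mh (measurableT_comp measurable_mergeT (pair2_measurable t1)).
Qed.

Lemma compose_inner_expect (q2 : R.-pker C ~> O) (x1 : O) :
  strictly_properly_weighted q2 (out_val x1) ref (gamma2 ^~ (out_val x1)) ->
  {ae q2 (out_val x1), forall x, (0 <= out_w x)%R} -> (0 <= out_w x1)%R ->
  \int[q2 (out_val x1)]_x2
     ((out_w x2 * out_w x1)%:E * h (mergeT (out_tr x2) (out_tr x1)))
  = (out_w x1)%:E * shifted_integral (out_val x1) (out_tr x1).
Proof.
move=> spw2 w2_ge0 w1_ge0.
exact: (spw_scaled spw2 w2_ge0 w1_ge0 (measurable_h_merge _) (fun t => h_ge0 _)).
Qed.

Lemma measurable_shifted_integral (ret : Tr -> C) :
  measurable_fun setT ret ->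
  measurable_fun setT (fun t1 => shifted_integral (ret t1) t1).
Proof.
move=> mret; apply: (@measurable_fun_partial_integral _ _ _ _ _ _ ref_sfinite
  (fun p => (gamma2 p.2 (ret p.1))%:E * h (mergeT p.2 p.1))).
- apply: emeasurable_funM.
    apply/measurable_EFinP; exact: (measurableT_comp measurable_gamma2
      (measurable_fun_pair measurable_snd (measurableT_comp mret measurable_fst))).
  exact: (measurableT_comp mh (measurableT_comp measurable_mergeT
      (measurable_fun_pair measurable_snd measurable_fst))).
- by move=> p; apply: mule_ge0; rewrite ?lee_fin.
Qed.

Lemma shifted_integral_ge0 (c : C) (t1 : Tr) : 0 <= shifted_integral c t1.
Proof. by apply: integral_ge0 => t _; apply: mule_ge0; rewrite ?lee_fin. Qed.

Lemma measurable_compose_inner (q2 : R.-pker C ~> O) :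
  measurable_fun setT (fun x1 : O => \int[q2 (out_val x1)]_x2
     ((out_w x2 * out_w x1)%:E * h (mergeT (out_tr x2) (out_tr x1)))).
Proof.
apply: (@measurable_fun_pker_integral _ _ _ _ _ _ _ q2 _ measurable_out_val
  (fun p : O * O =>
     (out_w p.2 * out_w p.1)%:E * h (mergeT (out_tr p.2) (out_tr p.1)))).
apply: emeasurable_funM.
  apply/measurable_EFinP; apply: measurable_funM.
    exact: (measurableT_comp measurable_out_w measurable_snd).
  exact: (measurableT_comp measurable_out_w measurable_fst).
exact: (measurableT_comp mh (measurableT_comp measurable_mergeT
  (measurable_fun_pair (measurableT_comp measurable_out_tr measurable_snd)
     (measurableT_comp measurable_out_tr measurable_fst)))).
Qed.

Lemma composite_density_integralE (gamma1 : Tr -> C -> R) (ret1 : C -> Tr -> C)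
    (c0 : C) :
  (forall t c, (0 <= gamma1 t c)%R) ->
  composite_density_integral mergeT ref gamma1 gamma2 ret1 c0 h
  = \int[ref]_t1 ((gamma1 t1 c0)%:E * shifted_integral (ret1 c0 t1) t1).
Proof.
move=> gamma1_ge0; apply: eq_integral => t1 _.
rewrite /shifted_integral -ge0_integralZl ?lee_fin //.
- by apply: eq_integral => t2 _; rewrite EFinM muleCA muleA.
- apply: emeasurable_funM; last exact: measurable_h_merge.
  apply/measurable_EFinP.
  exact: (measurableT_comp measurable_gamma2 (pair2_measurable (ret1 c0 t1))).
- by move=> t2 _; apply: mule_ge0; rewrite ?lee_fin.
Qed.
End composition.

Theorem mainTheorem6 (R : realType) (dC dT dRho : measure_display)
  (C : measurableType dC) (Tr : measurableType dT) (Rho : measurableType dRho)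
  (mergeT : Tr -> Tr -> Tr) (mergeRho : Rho -> Rho -> Rho)
  (disjRho : Rho -> Rho -> Prop)
  (ref : {measure set Tr -> \bar R})
  (q1 q2 : R.-pker C ~> Out C Tr Rho R)
  (gamma1 gamma2 : Tr -> C -> R)
  (ret1 : C -> Tr -> C) :
  (* regularity of the setting *)
  sigma_finite setT ref ->
  measurable_fun setT (fun p : Tr * Tr => mergeT p.1 p.2) ->
  measurable_fun setT (fun p : Tr * C => gamma1 p.1 p.2) ->
  measurable_fun setT (fun p : Tr * C => gamma2 p.1 p.2) ->
  (forall t c, (0 <= gamma1 t c)%R) -> (forall t c, (0 <= gamma2 t c)%R) ->
  (forall c, measurable_fun setT (ret1 c)) ->
  (* weights are nonnegative *)
  (forall c, {ae q1 c, forall x, (0 <= out_w x)%R}) ->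
  (forall c, {ae q2 c, forall x, (0 <= out_w x)%R}) ->
  (* the return value of q1 is the one associated with its trace *)
  (forall c, {ae q1 c, forall x, out_val x = ret1 c (out_tr x)}) ->
  (* compose requires dom(rho1) and dom(rho2) disjoint *)
  (forall c0, {ae q1 c0, forall x1, {ae q2 (out_val x1), forall x2,
      disjRho (out_rho x2) (out_rho x1)}}) ->
  (* hypotheses of the theorem *)
  (forall c, strictly_properly_weighted q1 c ref (gamma1 ^~ c)) ->
  (forall c, strictly_properly_weighted q2 c ref (gamma2 ^~ c)) ->
  forall c0 : C,
    spw_gen (compose_expect mergeT mergeRho q2 q1 c0) out_tr out_w
      (composite_density_integral mergeT ref gamma1 gamma2 ret1 c0).
Proof.
move=> ref_sf mmerge _ mg2 g1_ge0 g2_ge0 mret w1_ge0 w2_ge0 ret1E _ spw1 spw2 c0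
  h mh h_ge0.
pose H t1 := shifted_integral mergeT ref gamma2 h (ret1 c0 t1) t1.
have mH : measurable_fun setT H by exact: measurable_shifted_integral.
have inner_ae : ae_eq (q1 c0) setT
    (fun x1 => \int[q2 (out_val x1)]_x2
       ((out_w x2 * out_w x1)%:E * h (mergeT (out_tr x2) (out_tr x1))))
    (fun x1 => (out_w x1)%:E * H (out_tr x1)).
  apply: filterS2 (w1_ge0 c0) (ret1E c0) => x1 w1x1 retx1 _.
  rewrite (compose_inner_expect _ ref gamma2 mmerge _ mh h_ge0 _ _ (spw2 _)
    (w2_ge0 _) w1x1).
  by rewrite /H -retx1.
rewrite /compose_expect (ae_eq_integral _ _ measurableT _ _ inner_ae); last 2 first.
- exact: (measurable_compose_inner _ mmerge _ mh q2).
- apply: emeasurable_funM; first by apply/measurable_EFinP; exact: measurable_out_w.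
  exact: measurableT_comp mH measurable_out_tr.
have := spw1 c0 H mH (fun t => shifted_integral_ge0 mergeT ref _ g2_ge0 _ h_ge0 _ t).
rewrite /eval_expect => ->.
by rewrite composite_density_integralE.
Qed.
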